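(* Let $(X,\oplus,\lceil,0)$ be an MV-algebra. For $x,y\in X$ let $(u_n)_{n\in\mathbb{N}}$ be the Fibonacci sequence attached to $x,y$, i.e. $u_0=x$, $u_1=y$, $u_{n+2}=u_n\oplus u_{n+1}$. Suppose that for all $x,y\in X$ this sequence is $2$-stationary, i.e. $u_n=u_2$ for all $n\geq 2$. Then $X$ is a Boolean algebra, i.e. $x\oplus x=x$ for all $x\in X$.
   Context: An MV-algebra $(X,\oplus,\lceil,0)$ is an abelian monoid $(X,\oplus,0)$ with a unary operation $\lceil$ such that for all $x,y\in X$: $x\oplus\lceil 0=\lceil 0$; $\lceil(\lceil x)=x$; $\lceil(\lceil x\oplus y)\oplus y=\lceil(\lceil y\oplus x)\oplus x$. An MV-algebra in which every element is idempotent ($x\oplus x=x$) is a Boolean algebra. *)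

Record MVAlgebra := {
  mv_car :> Type;
  mv_oplus : mv_car -> mv_car -> mv_car;
  mv_neg : mv_car -> mv_car;
  mv_zero : mv_car;
  mv_assoc : forall x y z, mv_oplus x (mv_oplus y z) = mv_oplus (mv_oplus x y) z;
  mv_comm : forall x y, mv_oplus x y = mv_oplus y x;
  mv_zero_r : forall x, mv_oplus x mv_zero = x;
  mv_absorb : forall x, mv_oplus x (mv_neg mv_zero) = mv_neg mv_zero;
  mv_negneg : forall x, mv_neg (mv_neg x) = x;
  mv_luk : forall x y,
    mv_oplus (mv_neg (mv_oplus (mv_neg x) y)) y
    = mv_oplus (mv_neg (mv_oplus (mv_neg y) x)) x
}.

Fixpoint fib_pair (X : MVAlgebra) (x y : X) (n : nat) : X * X :=
  match n with
  | O => (x, y)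
  | S m => let p := fib_pair X x y m in (snd p, mv_oplus X (fst p) (snd p))
  end.

Definition mv_fib (X : MVAlgebra) (x y : X) (n : nat) : X := fst (fib_pair X x y n).

Definition stationary_from {T : Type} (k : nat) (u : nat -> T) : Prop :=
  forall n, k <= n -> u n = u k.

Lemma mv_fib_0 X x y : mv_fib X x y 0 = x. Proof. reflexivity. Qed.
Lemma mv_fib_1 X x y : mv_fib X x y 1 = y. Proof. reflexivity. Qed.
Lemma mv_fib_SS X x y n :
  mv_fib X x y (S (S n)) = mv_oplus X (mv_fib X x y n) (mv_fib X x y (S n)).
Proof. reflexivity. Qed.

From Stdlib Require Import Lia.

Lemma mv_zero_l (X : MVAlgebra) (x : X) : mv_oplus X (mv_zero X) x = x.
Proof. rewrite mv_comm; apply mv_zero_r. Qed.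

Lemma mv_fib_zero_r_2 (X : MVAlgebra) (x : X) : mv_fib X x (mv_zero X) 2 = x.
Proof. rewrite mv_fib_SS; apply mv_zero_r. Qed.

Lemma mv_fib_zero_r_3 (X : MVAlgebra) (x : X) : mv_fib X x (mv_zero X) 3 = x.
Proof. rewrite mv_fib_SS, mv_fib_zero_r_2; apply mv_zero_l. Qed.

Lemma mv_fib_zero_r_4 (X : MVAlgebra) (x : X) :
  mv_fib X x (mv_zero X) 4 = mv_oplus X x x.
Proof. rewrite mv_fib_SS, mv_fib_zero_r_2, mv_fib_zero_r_3; reflexivity. Qed.

Theorem proposition2p5 (X : MVAlgebra) :
  (forall x y : X, stationary_from 2 (mv_fib X x y)) ->
  forall x : X, mv_oplus X x x = x.
Proof.
  intros stationary x.
  rewrite <- mv_fib_zero_r_4, (stationary x (mv_zero X) 4) by lia.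
  apply mv_fib_zero_r_2.
Qed.
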